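(* Let $\mathbb F$ have characteristic $0$, view $\mathbb F^k$ as an $\mathbb F$-algebra with coordinatewise multiplication, let $\mathbf a_1,\dots,\mathbf a_n\in\mathbb F^k$, $d\ge0$, and $D(\mathbf x)=(\mathbf 1+\mathbf a_1x_1+\dots+\mathbf a_nx_n)^d\in\mathbb F^k[\mathbf x]$, where $\mathbf 1$ is the all-ones vector. Then $D$ has a cone-closed basis.
   Context: For $D\in\mathbb F^k[\mathbf x]$, $\mathrm{lrsp}(D)$ is the span of its coefficient vectors. A set of monomials is cone-closed if it contains every submonomial ($\mathbf x^{\mathbf e'}$ with $\mathbf e'\le\mathbf e$ coordinatewise) of each element; $D$ has a cone-closed basis if there is a cone-closed set of monomials whose coefficient vectors form a basis of $\mathrm{lrsp}(D)$. *)

From HB Require Import structures.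
From mathcomp Require Import all_boot all_order all_algebra.
Set Implicit Arguments. Unset Strict Implicit. Unset Printing Implicit Defensive.
Import GRing.Theory.
Local Open Scope ring_scope.

(* Vectors of F^k are row vectors 'rV[F]_k; multiplication in the F-algebra
   F^k is coordinatewise. Monomials x^e in n variables are exponent vectors
   e : {ffun 'I_n -> nat}. *)

(* Linear form 1 + a_1 x_1 + ... + a_n x_n, written with an extra variable
   x_0 := 1: index ord0 has coefficient the all-ones vector, lift ord0 i has a_i. *)
Definition lin_coef (F : fieldType) (k n : nat) (a : 'I_n -> 'rV[F]_k)
    (j : 'I_n.+1) : 'rV[F]_k :=
  match unlift ord0 j with None => const_mx 1 | Some i => a i end.

(* A term of the distributive expansion of the d-fold product: a choice f of a
   summand of the linear form for each of the d factors. Its monomial: *)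
Definition mono_of (n d : nat) (f : {ffun 'I_d -> 'I_n.+1}) : {ffun 'I_n -> nat} :=
  [ffun i => #|[set t | f t == lift ord0 i]|].

(* Coefficient of x^e in D(x) = (1 + a_1 x_1 + ... + a_n x_n)^d in F^k[x]:
   the sum of the (coordinatewise) products over all expansion terms with
   monomial x^e. *)
Definition Dcoef (F : fieldType) (k n : nat) (a : 'I_n -> 'rV[F]_k) (d : nat)
    (e : {ffun 'I_n -> nat}) : 'rV[F]_k :=
  \sum_(f : {ffun 'I_d -> 'I_n.+1} | mono_of f == e)
     \row_(c < k) \prod_(t < d) lin_coef a (f t) 0 c.

(* lrsp(D): span of all coefficient vectors of D. Every monomial with a
   possibly nonzero coefficient is mono_of f for some f, so it suffices to
   span over those. *)
Definition lrspD (F : fieldType) (k n : nat) (a : 'I_n -> 'rV[F]_k) (d : nat)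
    : {vspace 'rV[F]_k} :=
  <<[seq Dcoef a d (mono_of f) | f : {ffun 'I_d -> 'I_n.+1}]>>%VS.

Definition submono (n : nat) (e' e : {ffun 'I_n -> nat}) : Prop :=
  forall i, (e' i <= e i)%N.

Definition cone_closed (n : nat) (S : seq {ffun 'I_n -> nat}) : Prop :=
  forall e e', e \in S -> submono e' e -> e' \in S.

Definition has_cone_closed_basis (F : fieldType) (k n : nat)
    (a : 'I_n -> 'rV[F]_k) (d : nat) : Prop :=
  exists S : seq {ffun 'I_n -> nat},
    cone_closed S /\ basis_of (lrspD a d) [seq Dcoef a d e | e <- S].

From HB Require Import structures.
From mathcomp Require Import all_boot all_order all_algebra.
From mathcomp Require Import mpoly.
Set Implicit Arguments. Unset Strict Implicit. Unset Printing Implicit Defensive.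
Import Order.TTheory GRing.Theory.
Local Open Scope ring_scope.

(* Expanding the d-th power, the coefficient of x^m is a multinomial coefficient
   times the coordinatewise power a^m, so in characteristic 0 lrsp(D) is spanned
   by the a^m with deg m <= d.  Fix a graded monomial order and keep, greedily,
   the m whose a^m is not in the span of the a^g with g < m: they index a basis.
   This basis is cone-closed: if a^m' is in the span of smaller a^g and m' <= m,
   multiplying coordinatewise by a^(m - m') puts a^m in the span of the
   a^(g + m - m'), which are smaller than m and still of degree <= d. *)

Lemma card_nth_eq (T : eqType) (x0 x : T) (s : seq T) (d : nat) : size s = d ->
  #|[set t : 'I_d | nth x0 s t == x]| = count_mem x s.
Proof.
move=> size_s; rewrite cardsE cardE /enum_mem size_filter -enumT.
by rewrite -{2}(mkseq_nth x0 s) size_s /mkseq -val_enum_ord !count_map.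
Qed.

Section ScaledFamily.
Variables (K : fieldType) (vT : vectType K) (I : eqType) (c : I -> K) (p : I -> vT).
Variable X : seq I.
Hypothesis c_neq0 : {in X, forall x, c x != 0}.

Lemma span_scale : <<[seq c x *: p x | x <- X]>>%VS = <<map p X>>%VS.
Proof.
apply/eqP; rewrite eqEsubv; apply/andP; split;
  apply/span_subvP => _ /mapP[x xX ->].
  by apply/memvZ/memv_span/map_f.
rewrite -[p x](scalerK (c_neq0 xX)); apply/memvZ/memv_span.
exact: (map_f (fun x => c x *: p x)).
Qed.

Lemma basis_scale (U : {vspace vT}) :
  basis_of U [seq c x *: p x | x <- X] = basis_of U (map p X).
Proof. by rewrite !basisEdim span_scale !size_map. Qed.
End ScaledFamily.

Section GreedyBasis.
Local Open Scope order_scope.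
Variables (K : fieldType) (vT : vectType K) (disp : Order.disp_t) (T : orderType disp).
Variables (q : T -> vT) (M : seq T).

Definition span_below m := <<[seq q g | g <- M & g < m]>>%VS.

Definition greedy := [seq m <- M | q m \notin span_below m].

Lemma free_greedy : uniq M -> free (map q greedy).
Proof.
(* In decreasing order, each q m lies outside the span of the later, smaller, ones. *)
move=> uniqM; rewrite -(perm_free (perm_map q (permEl (perm_sort >=%O greedy)))).
have : {subset sort >=%O greedy <= greedy} by move=> m; rewrite mem_sort.
have : uniq (sort >=%O greedy) by rewrite sort_uniq filter_uniq.
elim: (sort _ _) (sort_sorted (@ge_total _ T) greedy) => [|m s IH] /=.
  by rewrite /free span_nil dimv0.
move=> sorted_ms /andP[m_notin_s uniq_s] sub_greedy.
rewrite free_cons IH ?(path_sorted sorted_ms) // => [|g gs]; last first.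
  by apply: sub_greedy; rewrite inE gs orbT.
have := sub_greedy m (mem_head _ _); rewrite mem_filter => /andP[qm_notin _].
rewrite andbT; apply: contra qm_notin; apply: subvP; apply: sub_span.
move=> _ /mapP[g gs ->]; apply: map_f; rewrite mem_filter.
have := sub_greedy g; rewrite inE gs orbT mem_filter => /(_ isT)/andP[_ ->].
rewrite andbT lt_neqAle; apply/andP; split.
  by apply: contraNneq m_notin_s => <-.
exact: (allP (order_path_min ge_trans sorted_ms)).
Qed.

Hypothesis lt_wf : well_founded (<%O : rel T).

Lemma span_greedy : <<map q greedy>>%VS = <<map q M>>%VS.
Proof.
apply/eqP; rewrite eqEsubv; apply/andP; split.
  by apply/sub_span/sub_map => m; rewrite mem_filter => /andP[].
apply/span_subvP => _ /mapP[m mM ->]; move: m mM.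
elim/(well_founded_ind lt_wf) => m IH mM.
have [m_greedy|] := boolP (m \in greedy); first exact/memv_span/map_f.
rewrite mem_filter mM andbT negbK; apply: subvP; apply/span_subvP => _ /mapP[g + ->].
by rewrite mem_filter => /andP[gm gM]; apply: IH.
Qed.

Lemma basis_greedy : uniq M -> basis_of <<map q M>> (map q greedy).
Proof. by move=> uniqM; rewrite /basis_of span_greedy eqxx free_greedy. Qed.

End GreedyBasis.

Definition mnms_upto n d : seq 'X_{1..n} := [seq val m | m : 'X_{1..n < d.+1}].

Lemma mem_mnms_upto n d (m : 'X_{1..n}) : (m \in mnms_upto n d) = (mdeg m <= d)%N.
Proof.
apply/mapP/idP => [[{}m _ ->]|dm]; first exact: (bmdeg m).
by have bm : (mdeg m < d.+1)%N := dm; exists (BMultinom bm); rewrite ?mem_enum.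
Qed.

Lemma mnms_upto_uniq n d : uniq (mnms_upto n d).
Proof. by rewrite (map_inj_uniq val_inj) enum_uniq. Qed.

Section MonomialPowers.
Variables (F : fieldType) (k n : nat) (a : 'I_n -> 'rV[F]_k).

Definition mpow (m : 'X_{1..n}) : 'rV[F]_k := \row_c \prod_i a i 0 c ^+ m i.

Lemma mpowD m1 m2 : mpow (m1 + m2)%MM = mpow m1 *m diag_mx (mpow m2).
Proof.
apply/rowP => c; rewrite mul_mx_diag !mxE -big_split.
by apply: eq_bigr => i _; rewrite mnmDE exprD.
Qed.

Lemma cone_greedy_mpow d m m' : m \in greedy mpow (mnms_upto n d) ->
  (m' <= m)%MM -> m' \in greedy mpow (mnms_upto n d).
Proof.
rewrite !mem_filter !mem_mnms_upto => /andP[m_notin dm] le_m'm.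
rewrite (leq_trans (lemc_mdeg (lem_leo le_m'm)) dm) andbT.
apply: contra m_notin => m'_in.
set h := (m - m')%MM; have Em : m = (m' + h)%MM by rewrite addmC submK.
pose shift : 'End('rV[F]_k) := linfun (mulmxr (diag_mx (mpow h))).
have := memv_img shift m'_in; rewrite limg_span lfunE /= -mpowD -Em.
apply: subvP; apply/span_subvP => _ /mapP[_ /mapP[g + ->] ->].
rewrite mem_filter mem_mnms_upto => /andP[lt_gm' _].
rewrite lfunE /= -mpowD; apply/memv_span/map_f.
rewrite mem_filter mem_mnms_upto Em ltmc_add2l lt_gm' mdegD /=.
by rewrite (leq_trans _ dm) // Em mdegD leq_add2r lemc_mdeg // ltW.
Qed.
End MonomialPowers.

Definition mnm_of_ffun {n} (e : {ffun 'I_n -> nat}) : 'X_{1..n} := [multinom e i | i < n].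
Definition ffun_of_mnm {n} (m : 'X_{1..n}) : {ffun 'I_n -> nat} := [ffun i => m i].

Lemma mnm_of_ffunK n : cancel (@mnm_of_ffun n) (@ffun_of_mnm n).
Proof. by move=> e; apply/ffunP => i; rewrite ffunE mnmE. Qed.

Lemma ffun_of_mnmK n : cancel (@ffun_of_mnm n) (@mnm_of_ffun n).
Proof. by move=> m; apply/mnmP => i; rewrite mnmE ffunE. Qed.

Section Expansion.
Variables (F : fieldType) (k n : nat) (a : 'I_n -> 'rV[F]_k) (d : nat).
Implicit Types (f : {ffun 'I_d -> 'I_n.+1}) (m : 'X_{1..n}).

Lemma expansion_term_mpow f :
  \row_c \prod_(t < d) lin_coef a (f t) 0 c = mpow a (mnm_of_ffun (mono_of f)).
Proof.
apply/rowP => c; rewrite !mxE (partition_big f xpredT) //= big_ord_recl /=.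
rewrite big1 => [|t /eqP ->]; last by rewrite /lin_coef unlift_none mxE.
rewrite mul1r; apply: eq_bigr => i _; rewrite mnmE ffunE cardsE -prodr_const.
by apply: eq_bigr => t /eqP ->; rewrite /lin_coef liftK.
Qed.

Lemma mdeg_mono_of f : (mdeg (mnm_of_ffun (mono_of f)) <= d)%N.
Proof.
rewrite mdegE -[X in (_ <= X)%N](card_ord d) -sum1_card (partition_big f xpredT) //=.
rewrite big_ord_recl /=.
rewrite (eq_bigr (fun i => \sum_(t | f t == lift ord0 i) 1)%N) ?leq_addl // => i _.
by rewrite mnmE ffunE sum1_card cardsE.
Qed.

Lemma mono_of_onto m : (mdeg m <= d)%N -> exists f, mono_of f = ffun_of_mnm m.
Proof.
move=> dm; pose s := flatten [seq nseq (m i) (lift ord0 i) | i <- enum 'I_n].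
have size_s : size s = mdeg m.
  rewrite size_flatten /shape -map_comp sumnE big_map big_enum mdegE.
  by apply: eq_bigr => i _; rewrite /= size_nseq.
pose s' := s ++ nseq (d - size s) ord0.
have size_s' : size s' = d by rewrite size_cat size_nseq subnKC // size_s.
exists [ffun t : 'I_d => nth ord0 s' t]; apply/ffunP => i; rewrite !ffunE.
have -> : [set t | [ffun t : 'I_d => nth ord0 s' t] t == lift ord0 i]
        = [set t : 'I_d | nth ord0 s' t == lift ord0 i].
  by apply/setP => t; rewrite !inE ffunE.
rewrite card_nth_eq // count_cat count_nseq /= mul0n addn0.
rewrite count_flatten -map_comp sumnE big_map big_enum /= (bigD1 i) //=.
rewrite count_nseq /= eqxx mul1n big1 ?addn0 // => j /negbTE j_neq_i.
by rewrite count_nseq /= (inj_eq lift_inj) j_neq_i.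
Qed.

Definition nterms m : nat :=
  #|[pred f : {ffun 'I_d -> 'I_n.+1} | mono_of f == ffun_of_mnm m]|.

Lemma Dcoef_mpow m : Dcoef a d (ffun_of_mnm m) = (nterms m)%:R *: mpow a m.
Proof.
rewrite /Dcoef scaler_nat -sumr_const; apply: eq_bigr => f /eqP mono_f.
by rewrite expansion_term_mpow mono_f ffun_of_mnmK.
Qed.

Lemma lrspD_Dcoef :
  lrspD a d = <<[seq Dcoef a d (ffun_of_mnm m) | m <- mnms_upto n d]>>%VS.
Proof.
apply: eq_span => v; apply/mapP/mapP => [[f _ ->]|[m]].
  exists (mnm_of_ffun (mono_of f)); last by rewrite mnm_of_ffunK.
  by rewrite mem_mnms_upto mdeg_mono_of.
by rewrite mem_mnms_upto => /mono_of_onto[f <-] ->; exists f; rewrite ?mem_enum.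
Qed.
End Expansion.

Theorem lemmaD1 (F : fieldType) (hF : [pchar F]%R =i pred0) (k n : nat)
    (a : 'I_n -> 'rV[F]_k) (d : nat) :
  has_cone_closed_basis a d.
Proof.
set Md := mnms_upto n d; set G := greedy (mpow a) Md.
have nterms_neq0 : {in Md, forall m, (nterms d m)%:R != 0 :> F}.
  move=> m; rewrite mem_mnms_upto => /mono_of_onto[f mono_f].
  by rewrite (pcharf0P _).1 // -lt0n; apply/card_gt0P; exists f; rewrite inE mono_f.
exists (map ffun_of_mnm G); split.
  move=> _ e' /mapP[m mG ->] le_e'm; rewrite -[e']mnm_of_ffunK map_f //.
  apply: cone_greedy_mpow mG _; apply/mnm_lepP => i.
  by have := le_e'm i; rewrite mnmE ffunE.
rewrite -map_comp (eq_map (Dcoef_mpow a d)) basis_scale; last first.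
  by move=> m; rewrite mem_filter => /andP[_]; exact: nterms_neq0.
rewrite lrspD_Dcoef (eq_map (Dcoef_mpow a d)) span_scale //.
exact: basis_greedy (@ltom_wf n) (mnms_upto_uniq n d).
Qed.
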